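(* Let $\Gamma$ be a simple, undirected, connected graph with $p\ge 2$ vertices and diameter $\mathrm{diam}(\Gamma)$. Then $$\gamma_{[3R]}(\Gamma)\le 3p-\frac{5\,\mathrm{diam}(\Gamma)}{3}+\frac{7}{3}.$$
   Context: The diameter is the maximum distance between two vertices. For a graph $\Gamma=(V,E)$ and $h:V\to\{0,1,2,3,4\}$, let $AN(v)=\{w\in N(v):h(w)\ge 1\}$, $AN[v]=AN(v)\cup\{v\}$ and $h(S)=\sum_{u\in S}h(u)$. $h$ is a triple Roman dominating function (3RDF) if every $v$ with $h(v)<3$ satisfies $h(AN[v])\ge|AN(v)|+3$. The triple Roman domination number $\gamma_{[3R]}(\Gamma)$ is the minimum weight $h(V)$ of a 3RDF of $\Gamma$. *)

From mathcomp Require Import all_boot all_order.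
Set Implicit Arguments. Unset Strict Implicit. Unset Printing Implicit Defensive.

Section Graph.
Variables (T : finType) (e : rel T).

Definition simple_graph := symmetric e /\ irreflexive e.
Definition connected_graph := forall x y : T, connect e x y.

Definition has_walk (n : nat) (x y : T) : bool :=
  [exists s : n.-tuple T, path e x s && (last x s == y)].

(* distance: least n with an n-edge walk (shortest walk = shortest path);
   defaults to #|T| if none exists (never happens for connected graphs) *)
Definition dist (x y : T) : nat := find (fun n => has_walk n x y) (iota 0 #|T|).

Definition diam : nat := \max_(x : T) \max_(y : T) dist x y.

Definition AN (h : {ffun T -> 'I_5}) (v : T) : {set T} :=
  [set w | e v w && (1 <= h w)].

Definition is3RDF (h : {ffun T -> 'I_5}) : bool :=
  [forall v, (h v < 3) ==>
     (h v + \sum_(w in AN h v) (h w : nat) >= #|AN h v| + 3)].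

Definition weight (h : {ffun T -> 'I_5}) : nat := \sum_(v : T) (h v : nat).

(* minimum weight of a 3RDF (the constant-4 function is always a 3RDF of
   weight 4|V|, so the default 4*#|T| does not affect the minimum) *)
Definition gamma3R : nat :=
  \big[minn/(4 * #|T|)%N]_(h : {ffun T -> 'I_5} | is3RDF h) weight h.

End Graph.

(** Take vertices [a], [b] at distance [d = diam] and a simple path from [a]
    to [b]; it has [n >= d + 1] vertices, which can be cut into [n %/ 3]
    blocks of three consecutive vertices.  Labelling each block [0, 4, 0] and
    every other vertex [3] gives a triple Roman dominating function, since each
    [0] lies next to the [4] of its block; its weight is [3 p - 5 (n %/ 3)],
    which is at most [3 p - (5 d - 7) / 3]. *)

From mathcomp Require Import all_boot all_order.
From mathcomp Require Import zify.
Set Implicit Arguments. Unset Strict Implicit. Unset Printing Implicit Defensive.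

Lemma seq_ind3 (A : Type) (P : seq A -> Prop) :
  (forall s, size s < 3 -> P s) ->
  (forall x y z s, P s -> P [:: x, y, z & s]) ->
  forall s, P s.
Proof.
move=> Psmall Pstep; suff Pn n s : size s < n -> P s by move=> s; apply: (Pn (size s).+1).
elim: n s => // n IH [|x [|y [|z s]]] lt_n; try exact: Psmall.
by apply/Pstep/IH; move: lt_n => /=; lia.
Qed.

Section BlockLabel.
Variables (T : finType) (e : rel T).

Fixpoint block_label (L : seq T) (v : T) : nat :=
  if L is [:: x, y, z & r] then
    if v == y then 4 else if (v == x) || (v == z) then 0 else block_label r v
  else 3.

Lemma block_label_short L v : size L < 3 -> block_label L v = 3.
Proof. by case: L => [|x [|y [|z r]]]. Qed.

Lemma block_label_notin L v : v \notin L -> block_label L v = 3.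
Proof.
elim/seq_ind3: L => [L /block_label_short-> //|x y z r IH].
by rewrite !inE !negb_or /= => /and4P[/negbTE-> /negbTE-> /negbTE-> /IH ->].
Qed.

Lemma block_labelP L v :
  [\/ block_label L v = 0, block_label L v = 3 | block_label L v = 4].
Proof.
elim/seq_ind3: L => [L /block_label_short->|x y z r IH] /=; first by constructor 2.
by case: ifP => _; [constructor 3 | case: ifP => _; [constructor 1 | exact: IH]].
Qed.

Lemma sum_indicator (x : T) (c : nat) : \sum_(v : T) (v == x) * c = c.
Proof. by rewrite (bigD1 x) //= eqxx mul1n big1 ?addn0 // => v /negbTE ->. Qed.

Lemma sum_block_label L :
  uniq L -> \sum_(v : T) block_label L v + 5 * (size L %/ 3) = 3 * #|T|.
Proof.
elim/seq_ind3: L => [L small_L _|x y z r IH].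
  rewrite (eq_bigr (fun _ => 3)) => [|v _]; last exact: block_label_short.
  by rewrite sum_nat_const divn_small // addn0 mulnC.
rewrite /= !inE !negb_or => /andP[/and3P[xy xz xr]] /andP[/andP[yz yr]] /andP[zr uniq_r].
have relabel v : block_label [:: x, y, z & r] v + (v == x) * 3 + (v == z) * 3
                 = block_label r v + (v == y) * 1.
  rewrite /=; case: (eqVneq v y) => [->|_].
    by rewrite eq_sym (negbTE xy) (negbTE yz) (block_label_notin yr).
  case: (eqVneq v x) => [->|_]; first by rewrite (negbTE xz) (block_label_notin xr).
  by case: (eqVneq v z) => [->|_]; rewrite ?(block_label_notin zr) /=; lia.
have : \sum_v (block_label [:: x, y, z & r] v + (v == x) * 3 + (v == z) * 3)
       = \sum_v (block_label r v + (v == y) * 1).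
  by apply: eq_bigr => v _; exact: relabel.
rewrite !big_split !sum_indicator => sum_eq.
have -> : (size r).+3 %/ 3 = size r %/ 3 + 1 by rewrite -addn3 divnDr // divnn.
by move: (IH uniq_r) sum_eq => /=; lia.
Qed.

Lemma block_label_neighbour4 L v :
  symmetric e -> sorted e L -> uniq L -> block_label L v = 0 ->
  exists2 w, e v w & block_label L w = 4.
Proof.
move=> esym; elim/seq_ind3: L => [[|x [|y [|z r]]] //|x y z r IH].
rewrite /= !inE !negb_or => /andP[exy] /andP[eyz path_r]
  /andP[/and3P[xy xz xr]] /andP[/andP[yz yr]] /andP[zr uniq_r].
case: (eqVneq v y) => // _; case: (eqVneq v x) => [-> _|_].
  by exists y; rewrite ?eqxx.
case: (eqVneq v z) => [-> _|_ /= /(IH (path_sorted path_r) uniq_r)[w vw rw]].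
  by exists y; rewrite ?eqxx // esym.
have w_r : w \in r by apply: contraLR isT => /block_label_notin; rewrite rw.
exists w => //=.
suff [-> -> ->] : [/\ (w == y) = false, (w == x) = false & (w == z) = false] by [].
by split; apply/negbTE/eqP => wu; [move: yr | move: xr | move: zr]; rewrite -wu w_r.
Qed.

End BlockLabel.

Section TripleRoman.
Variables (T : finType) (e : rel T).

Lemma gamma3R_le_weight (h : {ffun T -> 'I_5}) : is3RDF e h -> gamma3R e <= weight h.
Proof.
move=> h3R; rewrite /gamma3R; elim: (index_enum _) (mem_index_enum h) => // g r IH.
rewrite big_cons inE => /predU1P[<-|/IH le_r]; first by rewrite h3R geq_minl.
by case: ifP => // _; apply: leq_trans le_r; rewrite geq_minr.
Qed.

Lemma is3RDF_neighbour4 (h : {ffun T -> 'I_5}) :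
  (forall v, h v < 3 -> exists2 w, e v w & h w = 4 :> nat) -> is3RDF e h.
Proof.
move=> has4; apply/forallP => v; apply/implyP => /has4[w vw hw].
have w_AN : w \in AN e h v by rewrite inE vw hw.
have rest_le : #|AN e h v :\ w| <= \sum_(u in AN e h v | u != w) h u.
  rewrite -sum1_card (eq_bigl (fun u => (u \in AN e h v) && (u != w))); last first.
    by move=> u; rewrite !inE andbC.
  by apply: leq_sum => u /andP[]; rewrite inE => /andP[].
by rewrite (cardsD1 w) w_AN (bigD1 w) //= hw; lia.
Qed.

Hypothesis e_sym : symmetric e.

Lemma gamma3R_path_bound L :
  sorted e L -> uniq L -> gamma3R e + 5 * (size L %/ 3) <= 3 * #|T|.
Proof.
move=> L_path L_uniq.
pose h := [ffun v => inord (block_label L v) : 'I_5].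
have hE v : h v = block_label L v :> nat.
  by rewrite ffunE inordK //; case: (block_labelP L v) => ->.
have h3R : is3RDF e h.
  apply: is3RDF_neighbour4 => v; rewrite !hE => lt3.
  have L0 : block_label L v = 0 by case: (block_labelP L v) lt3 => ->.
  by have [w vw Lw] := block_label_neighbour4 e_sym L_path L_uniq L0; exists w; rewrite ?hE.
have -> : 3 * #|T| = weight h + 5 * (size L %/ 3).
  by rewrite -(sum_block_label L_uniq); congr (_ + _); apply: eq_bigr => v _; rewrite hE.
by rewrite leq_add2r gamma3R_le_weight.
Qed.

End TripleRoman.

Section Distance.
Variables (T : finType) (e : rel T).

Lemma dist_le_size_path x s : path e x s -> dist e x (last x s) <= size s.
Proof.
move=> x_s; rewrite /dist; case: leqP => // lt_s.
have s_lt : size s < #|T|.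
  by apply: leq_trans lt_s _; rewrite -[X in _ <= X](size_iota 0) find_size.
have := before_find 0 lt_s; rewrite nth_iota // add0n /has_walk => /negbT/negP[].
by apply/existsP; exists (in_tuple s); rewrite /= x_s eqxx.
Qed.

Lemma diam_attained : 0 < #|T| -> exists a b, diam e = dist e a b.
Proof.
move=> T_gt0; rewrite /diam.
have [a ->] := eq_bigmax (fun x => \max_(y : T) dist e x y) T_gt0.
by have [b ->] := eq_bigmax (fun y => dist e a y) T_gt0; exists a, b.
Qed.

End Distance.

Theorem proposition23 (T : finType) (e : rel T) :
  simple_graph e -> connected_graph e -> 2 <= #|T| ->
  3 * gamma3R e + 5 * diam e <= 9 * #|T| + 7.
Proof.
move=> [e_sym _] e_conn T_ge2.
have [a [b ->]] := diam_attained e (ltnW T_ge2).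
have /connectP[p a_p ->] := e_conn a b.
case: (shortenP a_p) => s a_s a_s_uniq _.
have := gamma3R_path_bound e_sym (L := a :: s) a_s a_s_uniq.
have := dist_le_size_path a_s.
rewrite /=; lia.
Qed.
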